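(* Let $n\ge 2$, $1\le n_1\le n-1$, $n_2=n-n_1$, and let $\xi_1,\dots,\xi_n$ be an orthonormal basis of $\mathbb{C}^n$. Let $\Pi_1$ be the orthogonal projection onto $\mathrm{span}\{\xi_1,\dots,\xi_{n_1}\}$ and $\Pi_2$ the orthogonal projection onto $\mathrm{span}\{\xi_{n_1+1},\dots,\xi_n\}$. Let $U$ be an $n\times n$ unitary matrix, $B_1=\Pi_1U$, $B_2=\Pi_2U$, and assume $\{B_1,B_2\}$ is unital, i.e. $B_1B_1^*+B_2B_2^*=I$. Let $0\le p\le 1$, $q=1-p$, and for $k,k'\in\mathbb{R}$ put $\omega_k=e^{ik}$, $B_{1k}=\overline{\omega}_kB_1$, $B_{2k}=\omega_kB_2$, $U_k=B_{1k}+B_{2k}$, and define the linear map $\mathcal{L}_{k,k'}$ on $n\times n$ complex matrices by $$\mathcal{L}_{k,k'}(\rho)=p\left(B_{1k}\rho B_{1k'}^*+B_{2k}\rho B_{2k'}^*\right)+qU_k\rho U_{k'}^*.$$ Let $\gamma_1=\frac{1}{\sqrt n}I$, for $2\le l\le n$ let $\gamma_l=\frac{1}{\sqrt{l(l-1)}}\,\mathrm{diag}(1,\dots,1,-(l-1),0,\dots,0)$ (with $l-1$ entries equal to $1$), and for $k\ne j$ let $\gamma_{k,j}$ be the normalized off-diagonal generalized Gell-Mann matrices (the normalization of $E_{kj}+E_{jk}$ for $k<j$ and of $-i(E_{jk}-E_{kj})$ for $k>j$, where $E_{kj}$ is the matrix unit in the basis $\xi_1,\dots,\xi_n$). Use the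 Hilbert–Schmidt inner product $\langle X,Y\rangle=\mathrm{Tr}(X^*Y)$ and write $\omega_\nu=e^{i\nu}$. Then for all $k,\nu\in\mathbb{R}$: (1) $\langle \gamma_{k,j},\mathcal{L}_{k,k+\nu}(\gamma_1)\rangle=0$ for all $k\ne j$; (2) $\langle\gamma_1,\mathcal{L}_{k,k+\nu}(\gamma_1)\rangle=\frac{2n_2\cos\nu}{n}+\frac{n_1-n_2}{n}\omega_\nu$; $\langle\gamma_l,\mathcal{L}_{k,k+\nu}(\gamma_1)\rangle=0$ for $2\le l\le n_1$; and $\langle\gamma_l,\mathcal{L}_{k,k+\nu}(\gamma_1)\rangle=\frac{2n_1 i\sin\nu}{\sqrt{n(l-1)l}}$ for $n_1+1\le l\le n$; (3) for every element $\gamma$ of this normalized basis, $\langle\gamma_1,\mathcal{L}_{k,k+\nu}(\gamma)\rangle=\omega_\nu\,\delta_{\gamma\gamma_1}-2i\sin\nu\,\frac{1}{\sqrt n}\mathrm{Tr}(B_2\gamma B_2^* )$. In particular, for $\nu=0$, the matrix of $\mathcal{L}_{k,k}$ with respect to this basis (ordered with $\gamma_1$ first) has first row and first column both equal to $(1,0,\dots,0)$.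
   Context: The basis $\{\gamma_1,\dots,\gamma_n\}\cup\{\gamma_{k,j}:k\neq j\}$ is the generalized Gell-Mann basis normalized to be orthonormal for the Hilbert–Schmidt inner product on $n\times n$ complex matrices. The map $\mathcal{L}_{k,k'}$ is the Fourier-transformed one-step superoperator of a partially open quantum random walk on $\mathbb{Z}$ with decoherence parameter $p$ (right moves governed by $B_1$, left moves by $B_2$). *)

From HB Require Import structures.
From mathcomp Require Import all_boot all_order all_algebra.
From mathcomp Require Import reals trigo.
From mathcomp Require Import complex.
Set Implicit Arguments. Unset Strict Implicit. Unset Printing Implicit Defensive.
Import Order.TTheory GRing.Theory Num.Theory.
Local Open Scope ring_scope.
Local Open Scope complex_scope.

Section Defs.
Variable R : realType.
Local Notation C := R[i].

Definition adj m n (A : 'M[C]_(m, n)) : 'M[C]_(n, m) := (map_mx Num.conj A)^T.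

Definition hs n (X Y : 'M[C]_n) : C := \tr (adj X *m Y).

Definition omega (k : R) : C := (cos k) +i* (sin k).

Variable n : nat.
Variable xi : 'I_n -> 'cV[C]_n.

Definition Eunit (k j : 'I_n) : 'M[C]_n := xi k *m adj (xi j).

(* orthogonal projections onto span{xi_1..xi_n1} and span{xi_(n1+1)..xi_n}
   (0-based: indices i < n1, resp. i >= n1) *)
Definition Proj1 (n1 : nat) : 'M[C]_n := \sum_(i < n | (i < n1)%N) Eunit i i.
Definition Proj2 (n1 : nat) : 'M[C]_n := \sum_(i < n | (n1 <= i)%N) Eunit i i.


(* gamma_l (2 <= l <= n, 1-based l) = diag(1,..,1,-(l-1),0,..,0)/sqrt(l(l-1)) in basis xi *)
Definition gammad (l : nat) : 'M[C]_n :=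
  ((Num.sqrt ((l * (l - 1))%:R : R))^-1)%:C *:
  \sum_(i < n) ((if (i.+1 < l)%N then 1 else if i.+1 == l then - ((l - 1)%:R) else 0) : C)
                 *: Eunit i i.

(* off-diagonal generalized Gell-Mann matrices gamma_{k,j} (k <> j), normalized;
   indices are 0-based ordinals (the order is preserved) *)
Definition gammao (k j : 'I_n) : 'M[C]_n :=
  if (k < j)%N then ((Num.sqrt (2 : R))^-1)%:C *: (Eunit k j + Eunit j k)
  else ((Num.sqrt (2 : R))^-1)%:C *: (- 'i *: (Eunit j k - Eunit k j)).

End Defs.

Definition gamma1 (R : realType) (n : nat) : 'M[R[i]]_n :=
  ((Num.sqrt (n%:R : R))^-1)%:C *: 1%:M.

(* the Fourier-transformed one-step superoperator L_{k,k'} *)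
Definition Lmap (R : realType) n (B1 B2 : 'M[R[i]]_n) (p : R) (k k' : R)
  (rho : 'M[R[i]]_n) : 'M[R[i]]_n :=
  let B1k := (omega k)^* *: B1 in
  let B2k := omega k *: B2 in
  let B1k' := (omega k')^* *: B1 in
  let B2k' := omega k' *: B2 in
  let Uk := B1k + B2k in
  let Uk' := B1k' + B2k' in
  p%:C *: (B1k *m rho *m adj B1k' + B2k *m rho *m adj B2k')
  + (1 - p)%:C *: (Uk *m rho *m adj Uk').

From HB Require Import structures.
From mathcomp Require Import all_boot all_order all_algebra.
From mathcomp Require Import reals trigo.
From mathcomp Require Import complex.
From mathcomp Require Import ring zify.
Import Order.TTheory GRing.Theory Num.Theory.
Local Open Scope ring_scope.
Local Open Scope complex_scope.
Set Implicit Arguments. Unset Strict Implicit.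

(* Since B1 B2^* = P1 P2 = 0 and B1^* B1 + B2^* B2 = U^* (P1 + P2) U = I, expanding
   L_{k,k+nu} and taking traces gives
     tr L_{k,k+nu}(rho) = omega_nu tr rho - 2 i sin nu tr (B2 rho B2^* ),
   which is (3) because <gamma_1, X> = tr X / sqrt n and every other basis matrix
   is traceless.  On rho = gamma_1 the same expansion gives
     L_{k,k+nu}(gamma_1) = (omega_nu P1 + conj omega_nu P2) / sqrt n,
   a matrix diagonal in the basis xi: its coordinates along the off-diagonal
   gamma_{k,j} vanish, and its coordinate along gamma_l only depends on how many
   of the first l - 1 indices are below n1, which gives (2). *)

Section Adjoint.
Variable R : realType.
Local Notation C := R[i].

Lemma conj_realC (x : R) : Num.conj x%:C = x%:C :> C.
Proof. exact: conjc_real. Qed.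

Lemma adjmxM m n p (A : 'M[C]_(m, n)) (B : 'M[C]_(n, p)) :
  adj (A *m B) = adj B *m adj A.
Proof. by rewrite /adj map_mxM trmx_mul. Qed.

Lemma adjmxD m n (A B : 'M[C]_(m, n)) : adj (A + B) = adj A + adj B.
Proof. by rewrite /adj map_mxD linearD. Qed.

Lemma adjmxB m n (A B : 'M[C]_(m, n)) : adj (A - B) = adj A - adj B.
Proof. by rewrite /adj map_mxB linearB. Qed.

Lemma adjmxZ m n (c : C) (A : 'M[C]_(m, n)) : adj (c *: A) = Num.conj c *: adj A.
Proof. by rewrite /adj map_mxZ linearZ. Qed.

Lemma adjmxK m n (A : 'M[C]_(m, n)) : adj (adj A) = A.
Proof. by apply/matrixP => i j; rewrite !mxE conjCK. Qed.

Lemma adjmx1 n : adj (1%:M : 'M[C]_n) = 1%:M.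
Proof. by apply/matrixP => i j; rewrite !mxE eq_sym rmorph_nat. Qed.

Lemma hsZl n (c : C) (X Y : 'M[C]_n) : hs (c *: X) Y = Num.conj c * hs X Y.
Proof. by rewrite /hs adjmxZ -scalemxAl mxtraceZ. Qed.

Lemma hsDl n (X Y Z : 'M[C]_n) : hs (X + Y) Z = hs X Z + hs Y Z.
Proof. by rewrite /hs adjmxD mulmxDl mxtraceD. Qed.

Lemma hsBl n (X Y Z : 'M[C]_n) : hs (X - Y) Z = hs X Z - hs Y Z.
Proof. by rewrite /hs adjmxB mulmxBl linearB. Qed.

Lemma hsDr n (X Y Z : 'M[C]_n) : hs X (Y + Z) = hs X Y + hs X Z.
Proof. by rewrite /hs mulmxDr mxtraceD. Qed.

Lemma hsZr n (c : C) (X Y : 'M[C]_n) : hs X (c *: Y) = c * hs X Y.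
Proof. by rewrite /hs -scalemxAr mxtraceZ. Qed.

Lemma hsBr n (X Y Z : 'M[C]_n) : hs X (Y - Z) = hs X Y - hs X Z.
Proof. by rewrite /hs mulmxBr linearB. Qed.

Lemma hs1r n (X : 'M[C]_n) : hs X 1%:M = \tr (adj X).
Proof. by rewrite /hs mulmx1. Qed.

Lemma hs1l n (Y : 'M[C]_n) : hs 1%:M Y = \tr Y.
Proof. by rewrite /hs adjmx1 mul1mx. Qed.

Lemma mxtrace_adj n (X : 'M[C]_n) : \tr (adj X) = Num.conj (\tr X).
Proof.
by rewrite /adj mxtrace_tr /mxtrace rmorph_sum; apply: eq_bigr => i _; rewrite mxE.
Qed.

End Adjoint.

Section MatrixUnits.
Variable R : realType.
Local Notation C := R[i].
Variables (n : nat) (xi : 'I_n -> 'cV[C]_n).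
Hypothesis xi_orthonormal : forall i j : 'I_n, adj (xi i) *m xi j = (i == j)%:R%:M.
Local Notation E := (Eunit xi).

Lemma Eunit_mul a b c d : E a b *m E c d = (b == c)%:R *: E a d.
Proof.
by rewrite /Eunit mulmxA -(mulmxA (xi a)) xi_orthonormal mul_mx_scalar scalemxAl.
Qed.

Lemma adj_Eunit a b : adj (E a b) = E b a.
Proof. by rewrite /Eunit adjmxM adjmxK. Qed.

Lemma mxtrace_Eunit a b : \tr (E a b) = (a == b)%:R.
Proof. by rewrite /Eunit mxtrace_mulC xi_orthonormal mxtrace_scalar eq_sym. Qed.

Definition xi_diag (f : 'I_n -> C) : 'M[C]_n := \sum_(i < n) f i *: E i i.

Lemma eq_xi_diag f g : f =1 g -> xi_diag f = xi_diag g.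
Proof. by move=> fg; apply: eq_bigr => i _; rewrite fg. Qed.

Lemma mul_Eunit_diag a b f : E a b *m xi_diag f = f b *: E a b.
Proof.
rewrite mulmx_sumr (bigD1 b) //= big1 ?addr0 => [|i /negbTE ib].
  by rewrite -scalemxAr Eunit_mul eqxx scale1r.
by rewrite -scalemxAr Eunit_mul eq_sym ib scale0r scaler0.
Qed.

Lemma mxtrace_xi_diag f : \tr (xi_diag f) = \sum_(i < n) f i.
Proof.
rewrite /xi_diag raddf_sum; apply: eq_bigr => i _ /=.
by rewrite mxtraceZ mxtrace_Eunit eqxx mulr1.
Qed.

Lemma adj_xi_diag f : adj (xi_diag f) = xi_diag (fun i => Num.conj (f i)).
Proof.
rewrite /xi_diag; elim/big_rec2: _ => [|i A B _ <-].
  by apply/matrixP => i j; rewrite !mxE rmorph0.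
by rewrite adjmxD adjmxZ adj_Eunit.
Qed.

Lemma hs_xi_diag f g :
  hs (xi_diag f) (xi_diag g) = \sum_(i < n) Num.conj (f i) * g i.
Proof.
rewrite /hs adj_xi_diag {1}/xi_diag mulmx_suml raddf_sum /=.
by apply: eq_bigr => i _; rewrite -scalemxAl mul_Eunit_diag scalerA mxtraceZ
  mxtrace_Eunit eqxx mulr1.
Qed.

Lemma hs_Eunit_diag a b f : a != b -> hs (E a b) (xi_diag f) = 0.
Proof.
by move=> ab; rewrite /hs adj_Eunit mul_Eunit_diag mxtraceZ mxtrace_Eunit
  eq_sym (negbTE ab) mulr0.
Qed.

Lemma sum_Eunit_diag (P : pred 'I_n) :
  \sum_(i < n | P i) E i i = xi_diag (fun i => (P i)%:R).
Proof.
rewrite /xi_diag big_mkcond; apply: eq_bigr => i _.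
by case: ifP; rewrite ?scale1r ?scale0r.
Qed.

Lemma adj_sum_Eunit (P : pred 'I_n) :
  adj (\sum_(i < n | P i) E i i) = \sum_(i < n | P i) E i i.
Proof.
by rewrite sum_Eunit_diag adj_xi_diag; apply: eq_xi_diag => i; rewrite rmorph_nat.
Qed.

Lemma sum_Eunit_idem (P : pred 'I_n) :
  (\sum_(i < n | P i) E i i) *m (\sum_(i < n | P i) E i i) = \sum_(i < n | P i) E i i.
Proof.
rewrite {1}mulmx_suml; apply: eq_bigr => i Pi.
by rewrite sum_Eunit_diag mul_Eunit_diag Pi scale1r.
Qed.

Lemma mxtrace_gammao a b : a != b -> \tr (gammao xi a b) = 0.
Proof.
move=> ab; have ba : b != a by rewrite eq_sym.
by rewrite /gammao; case: ifP => _;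
  rewrite !mxtraceZ (linearB, mxtraceD) /= !mxtrace_Eunit (negbTE ab) (negbTE ba)
    ?subr0 ?addr0 !mulr0.
Qed.

Lemma hs_gammao_diag a b f : a != b -> hs (gammao xi a b) (xi_diag f) = 0.
Proof.
move=> ab; have ba : b != a by rewrite eq_sym.
by rewrite /gammao; case: ifP => _;
  rewrite !hsZl (hsBl, hsDl) !hs_Eunit_diag // ?addr0 ?subr0 !mulr0.
Qed.

End MatrixUnits.

Section GellMannDiagonal.
Variable R : realType.
Local Notation C := R[i].

Definition gm_coef (l i : nat) : C :=
  if (i.+1 < l)%N then 1 else if i.+1 == l then - ((l - 1)%:R) else 0.

Definition gm_scale (l : nat) : R := (Num.sqrt ((l * (l - 1))%:R : R))^-1.

Lemma gammadE n (xi : 'I_n -> 'cV[C]_n) l :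
  gammad xi l = (gm_scale l)%:C *: xi_diag xi (fun i => gm_coef l i).
Proof. by []. Qed.

Lemma conj_gm_coef l i : Num.conj (gm_coef l i) = gm_coef l i.
Proof.
by rewrite /gm_coef; case: ifP => _; [|case: ifP => _];
  rewrite ?rmorph1 ?rmorphN ?rmorph_nat ?rmorph0.
Qed.

Lemma sum_gm_coef n l (g : nat -> C) : (1 <= l <= n)%N ->
  \sum_(i < n) gm_coef l i * g i = \sum_(0 <= i < l.-1) g i - (l - 1)%:R * g l.-1.
Proof.
case/andP=> l_gt0 le_ln; have lE : l.-1.+1 = l by rewrite prednK.
have tail0 : \sum_(l <= i < n) gm_coef l i * g i = 0.
  rewrite big_nat_cond big1 // => i /andP[/andP[le_li _] _].
  by rewrite /gm_coef ltnNge (leq_trans le_li) // gtn_eqF ?mul0r.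
have head : \sum_(0 <= i < l.-1) gm_coef l i * g i = \sum_(0 <= i < l.-1) g i.
  by apply: eq_big_nat => i /andP[_ lt_il]; rewrite /gm_coef -lE ltnS lt_il mul1r.
rewrite -(big_mkord xpredT (fun i => gm_coef l i * g i)).
rewrite (big_cat_nat (leq0n _) (leq_trans (leq_pred l) le_ln)) /= head.
rewrite (big_cat_nat (leqnSn l.-1)) /=; last by rewrite lE.
rewrite big_nat1 lE tail0 addr0.
by rewrite /gm_coef lE ltnn eqxx mulNr.
Qed.

Lemma sum_nat_lt k m : \sum_(0 <= i < k) ((i < m)%N%:R : C) = (minn k m)%:R.
Proof.
elim: k => [|k IHk]; first by rewrite big_geq // min0n.
rewrite big_nat_recr //= IHk -natrD; congr _%:R.
by case: (ltnP k m) => h; lia.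
Qed.

Lemma sum_gm_coef_lt n l m : (1 <= l <= n)%N ->
  \sum_(i < n) gm_coef l i * (i < m)%N%:R = if (l <= m)%N then 0 else m%:R.
Proof.
move=> hl; rewrite (sum_gm_coef (fun i => (i < m)%N%:R)) // sum_nat_lt subn1.
have l_gt0 : (0 < l)%N by case/andP: hl.
case: (leqP l m) => [le_lm|lt_ml].
  have lt_l1m : (l.-1 < m)%N by case: (l) l_gt0 le_lm => [|l'].
  by rewrite (minn_idPl (ltnW lt_l1m)) lt_l1m mulr1 subrr.
have le_ml1 : (m <= l.-1)%N by case: (l) l_gt0 lt_ml => [|l'].
by rewrite (minn_idPr le_ml1) ltnNge le_ml1 mulr0 subr0.
Qed.

End GellMannDiagonal.

Arguments gm_coef {R}.
Arguments gm_scale {R}.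

Section GellMannTraces.
Variable R : realType.
Local Notation C := R[i].
Variables (n : nat) (xi : 'I_n -> 'cV[C]_n).
Hypothesis xi_orthonormal : forall i j : 'I_n, adj (xi i) *m xi j = (i == j)%:R%:M.

Lemma mxtrace_gammad l : (1 <= l <= n)%N -> \tr (gammad xi l) = 0.
Proof.
move=> hl; rewrite gammadE mxtraceZ mxtrace_xi_diag //.
rewrite (eq_bigr (fun i : 'I_n => gm_coef l i * (i < n)%N%:R)) => [|i _]; last first.
  by rewrite ltn_ord mulr1.
by rewrite sum_gm_coef_lt //; case/andP: hl => _ ->; rewrite mulr0.
Qed.

Lemma hs_gammad_Proj1 l m : (1 <= l <= n)%N ->
  hs (gammad xi l) (Proj1 xi m) = (gm_scale l)%:C * (if (l <= m)%N then 0 else m%:R).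
Proof.
move=> hl; rewrite gammadE hsZl conj_realC /Proj1 sum_Eunit_diag // hs_xi_diag //.
rewrite -(@sum_gm_coef_lt R n l m hl); congr (_ * _).
by apply: eq_bigr => i _; rewrite conj_gm_coef.
Qed.

Lemma mxtrace_Proj1 m : (m <= n)%N -> \tr (Proj1 xi m) = m%:R.
Proof.
move=> le_mn; rewrite /Proj1 sum_Eunit_diag // mxtrace_xi_diag //.
by rewrite -(big_mkord xpredT (fun i => (i < m)%N%:R)) sum_nat_lt (minn_idPr le_mn).
Qed.

End GellMannTraces.

Section Omega.
Variable R : realType.
Local Notation C := R[i].

Lemma omegaE (t : R) : omega t = (cos t)%:C + 'i * (sin t)%:C.
Proof. by apply/eqP; rewrite eq_complex /=; apply/andP; split; apply/eqP; ring. Qed.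

Lemma omega0 : omega 0 = 1 :> C.
Proof. by rewrite /omega cos0 sin0. Qed.

Lemma omegaD (s t : R) : omega (s + t) = omega s * omega t.
Proof.
rewrite /omega cosD sinD; apply/eqP; rewrite eq_complex /=.
by apply/andP; split; apply/eqP; ring.
Qed.

Lemma conj_omegaK (t : R) : Num.conj (omega t) * omega t = 1.
Proof.
apply/eqP; rewrite eq_complex /=; apply/andP; split; apply/eqP; last by ring.
by rewrite -(cos2Dsin2 t); ring.
Qed.

Lemma conj_omega_mulD (k t : R) : Num.conj (omega k) * omega (k + t) = omega t.
Proof. by rewrite omegaD mulrA conj_omegaK mul1r. Qed.

Lemma omega_mul_conjD (k t : R) : omega k * Num.conj (omega (k + t)) = Num.conj (omega t).
Proof. by rewrite -(conjCK (omega k)) -rmorphM conj_omega_mulD. Qed.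

Lemma omega_sub_conj (t : R) : omega t - Num.conj (omega t) = 2%:R * 'i * (sin t)%:C.
Proof. by apply/eqP; rewrite eq_complex /=; apply/andP; split; apply/eqP; ring. Qed.

End Omega.

Lemma sandwich_expand (F : comRingType) n (X1 X2 Y1 Y2 rho : 'M[F]_n) (a b a' b' q : F) :
  q *: ((a' *: X1) *m rho *m (b *: Y1) + (a *: X2) *m rho *m (b' *: Y2))
  + (1 - q) *: ((a' *: X1 + a *: X2) *m rho *m (b *: Y1 + b' *: Y2))
  = (a' * b) *: (X1 *m rho *m Y1) + (a * b') *: (X2 *m rho *m Y2)
  + ((1 - q) * (a' * b')) *: (X1 *m rho *m Y2) + ((1 - q) * (a * b)) *: (X2 *m rho *m Y1).
Proof.
rewrite !mulmxDl !mulmxDr -!scalemxAl -!scalemxAr.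
move: (X1 *m rho *m Y1) (X2 *m rho *m Y2) (X1 *m rho *m Y2) (X2 *m rho *m Y1)
  => Z11 Z22 Z12 Z21.
by apply/matrixP => i j; rewrite !mxE; ring.
Qed.

Section Superoperator.
Variable R : realType.
Local Notation C := R[i].

Lemma Lmap_expand n (B1 B2 rho : 'M[C]_n) p k k' :
  Lmap B1 B2 p k k' rho =
    (Num.conj (omega k) * omega k') *: (B1 *m rho *m adj B1)
  + (omega k * Num.conj (omega k')) *: (B2 *m rho *m adj B2)
  + ((1 - p)%:C * (Num.conj (omega k) * Num.conj (omega k'))) *: (B1 *m rho *m adj B2)
  + ((1 - p)%:C * (omega k * omega k')) *: (B2 *m rho *m adj B1).
Proof.
rewrite /Lmap /= !adjmxD !adjmxZ !conjCK.
have -> : (1 - p)%:C = 1 - p%:C :> C by rewrite rmorphB.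
exact: sandwich_expand.
Qed.

Variables (n : nat) (P1 P2 U : 'M[C]_n) (p : R).
Hypotheses (U_isometry : adj U *m U = 1%:M) (U_coisometry : U *m adj U = 1%:M).
Hypotheses (P1_adj : adj P1 = P1) (P1_idem : P1 *m P1 = P1) (P1_add_P2 : P1 + P2 = 1%:M).
Local Notation B1 := (P1 *m U).
Local Notation B2 := (P2 *m U).

Let P2E : P2 = 1%:M - P1. Proof. by rewrite -P1_add_P2 addrAC subrr add0r. Qed.
Let P2_adj : adj P2 = P2. Proof. by rewrite P2E adjmxB adjmx1 P1_adj. Qed.
Let P1P2 : P1 *m P2 = 0. Proof. by rewrite P2E mulmxBr mulmx1 P1_idem subrr. Qed.
Let P2P1 : P2 *m P1 = 0. Proof. by rewrite P2E mulmxBl mul1mx P1_idem subrr. Qed.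
Let P2_idem : P2 *m P2 = P2. Proof. by rewrite {1}P2E mulmxBl mul1mx P1P2 subr0. Qed.

Lemma mulmx_compress_adj (P Q : 'M[C]_n) : (P *m U) *m adj (Q *m U) = P *m adj Q.
Proof. by rewrite adjmxM mulmxA -(mulmxA P) U_coisometry mulmx1. Qed.

Lemma adj_mulmx_compress (P Q : 'M[C]_n) :
  adj (P *m U) *m (Q *m U) = adj U *m (adj P *m Q) *m U.
Proof. by rewrite adjmxM !mulmxA. Qed.

Lemma adj_compress_sum : adj B1 *m B1 + adj B2 *m B2 = 1%:M.
Proof.
by rewrite !adj_mulmx_compress P1_adj P2_adj P1_idem P2_idem -mulmxDl -mulmxDr
  P1_add_P2 mulmx1 U_isometry.
Qed.

Lemma Lmap_trace k t rho :
  \tr (Lmap B1 B2 p k (k + t) rho)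
  = omega t * \tr rho - 2%:R * 'i * (sin t)%:C * \tr (B2 *m rho *m adj B2).
Proof.
have trC (X Y : 'M[C]_n) : \tr (X *m rho *m adj Y) = \tr (adj Y *m X *m rho).
  by rewrite mxtrace_mulC mulmxA.
have tr12 : \tr (B1 *m rho *m adj B2) = 0.
  by rewrite trC adj_mulmx_compress P2_adj P2P1 mulmx0 !mul0mx mxtrace0.
have tr21 : \tr (B2 *m rho *m adj B1) = 0.
  by rewrite trC adj_mulmx_compress P1_adj P1P2 mulmx0 !mul0mx mxtrace0.
have tr11 : \tr (B1 *m rho *m adj B1) = \tr rho - \tr (B2 *m rho *m adj B2).
  by rewrite -{2}(mul1mx rho) -adj_compress_sum mulmxDl mxtraceD !trC addrK.
rewrite Lmap_expand conj_omega_mulD omega_mul_conjD -omega_sub_conj.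
move: (B1 *m rho *m adj B1) (B2 *m rho *m adj B2) (B1 *m rho *m adj B2)
  (B2 *m rho *m adj B1) tr11 tr12 tr21 => X11 X22 X12 X21 tr11 tr12 tr21.
rewrite !mxtraceD !mxtraceZ tr11 tr12 tr21.
ring.
Qed.

Lemma Lmap_scalar k t (c : C) :
  Lmap B1 B2 p k (k + t) (c *: 1%:M)
  = c *: (omega t *: P1 + Num.conj (omega t) *: P2).
Proof.
have scal (X Y : 'M[C]_n) : X *m (c *: 1%:M) *m Y = c *: (X *m Y).
  by rewrite scalemx1 mul_mx_scalar -scalemxAl.
rewrite Lmap_expand !scal !mulmx_compress_adj P1_adj P2_adj P1_idem P2_idem P1P2 P2P1.
by rewrite conj_omega_mulD omega_mul_conjD !scaler0 !addr0 scalerDr !scalerA !(mulrC c).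
Qed.

End Superoperator.

Lemma hs_gamma1 (R : realType) n (X : 'M[R[i]]_n) :
  hs (gamma1 R n) X = ((Num.sqrt (n%:R : R))^-1)%:C * \tr X.
Proof. by rewrite /gamma1 hsZl conj_realC hs1l. Qed.

Lemma invsqrt_sq (R : realType) (x : R) :
  0 <= x -> (Num.sqrt x)^-1 * (Num.sqrt x)^-1 = x^-1.
Proof. by move=> x_ge0; rewrite -invfM -expr2 sqr_sqrtr. Qed.

Section PartiallyOpenWalk.
Variable R : realType.
Local Notation C := R[i].
Variables (n n1 : nat) (xi : 'I_n -> 'cV[C]_n) (U : 'M[C]_n) (p : R).
Hypothesis xi_orthonormal : forall i j : 'I_n, adj (xi i) *m xi j = (i == j)%:R%:M.
Hypotheses (U_isometry : adj U *m U = 1%:M) (U_coisometry : U *m adj U = 1%:M).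
Hypothesis unital : (Proj1 xi n1 *m U) *m adj (Proj1 xi n1 *m U)
    + (Proj2 xi n1 *m U) *m adj (Proj2 xi n1 *m U) = 1%:M.
Hypotheses (n_gt0 : (0 < n)%N) (le_n1n : (n1 <= n)%N).

Local Notation P1 := (Proj1 xi n1).
Local Notation P2 := (Proj2 xi n1).
Local Notation L := (Lmap (P1 *m U) (P2 *m U) p).
Local Notation g1 := (gamma1 R n).
Local Notation s := ((Num.sqrt (n%:R : R))^-1).

Let P1_adj : adj P1 = P1. Proof. exact: adj_sum_Eunit. Qed.
Let P1_idem : P1 *m P1 = P1. Proof. exact: sum_Eunit_idem. Qed.
Let P2_adj : adj P2 = P2. Proof. exact: adj_sum_Eunit. Qed.
Let P2_idem : P2 *m P2 = P2. Proof. exact: sum_Eunit_idem. Qed.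

(* Unitality of {B1, B2} already makes the two projections complementary. *)
Let P1_add_P2 : P1 + P2 = 1%:M.
Proof.
by rewrite -unital !(mulmx_compress_adj U_coisometry) P1_adj P2_adj P1_idem P2_idem.
Qed.

Let P2E : P2 = 1%:M - P1. Proof. by rewrite -P1_add_P2 addrAC subrr add0r. Qed.

Let s_sq : s%:C * s%:C = (n%:R)^-1 :> C.
Proof. by rewrite -rmorphM invsqrt_sq ?ler0n // fmorphV rmorph_nat. Qed.

Let n_neq0 : n%:R != 0 :> C.
Proof. by rewrite pnatr_eq0 -lt0n. Qed.

Lemma Lmap_gamma1 k t :
  L k (k + t) g1 = s%:C *: (omega t *: P1 + Num.conj (omega t) *: P2).
Proof. exact: Lmap_scalar. Qed.

Lemma hs_gamma1_Lmap k t rho :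
  hs g1 (L k (k + t) rho)
  = s%:C * (omega t * \tr rho
            - 2%:R * 'i * (sin t)%:C * \tr ((P2 *m U) *m rho *m adj (P2 *m U))).
Proof. by rewrite hs_gamma1 Lmap_trace. Qed.

Lemma hs_gamma1_Lmap_traceless k t rho : \tr rho = 0 ->
  hs g1 (L k (k + t) rho)
  = - 2%:R * 'i * (sin t / Num.sqrt n%:R)%:C * \tr ((P2 *m U) *m rho *m adj (P2 *m U)).
Proof. by move=> tr0; rewrite hs_gamma1_Lmap tr0 rmorphM; ring. Qed.

Lemma hs_gamma1_Lmap_gamma1 k t :
  hs g1 (L k (k + t) g1)
  = omega t
    - 2%:R * 'i * (sin t / Num.sqrt n%:R)%:C * \tr ((P2 *m U) *m g1 *m adj (P2 *m U)).
Proof.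
rewrite hs_gamma1_Lmap {1}/gamma1 mxtraceZ mxtrace1 rmorphM.
have sn_omega : s%:C * (omega t * (s%:C * n%:R)) = omega t.
  by rewrite mulrCA [s%:C * (s%:C * _)]mulrA s_sq mulVf // mulr1.
by rewrite mulrBr sn_omega; ring.
Qed.

Lemma mxtrace_B2_gamma1 :
  \tr ((P2 *m U) *m g1 *m adj (P2 *m U)) = s%:C * (n - n1)%N%:R.
Proof.
rewrite /gamma1 scalemx1 mul_mx_scalar -scalemxAl mxtraceZ.
rewrite (mulmx_compress_adj U_coisometry) P2_adj P2_idem.
by rewrite P2E linearB /= mxtrace1 mxtrace_Proj1 // natrB.
Qed.

Lemma hs_gamma1_Lmap_gamma1E k t :
  hs g1 (L k (k + t) g1)
  = (2 * (n - n1)%N%:R * cos t / n%:R)%:C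
    + ((n1%:R - (n - n1)%N%:R) / n%:R)%:C * omega t.
Proof.
rewrite hs_gamma1_Lmap_gamma1 mxtrace_B2_gamma1.
transitivity (omega t - 2%:R * 'i * (sin t)%:C * (n - n1)%N%:R * (s%:C * s%:C)).
  by rewrite rmorphM; ring.
rewrite s_sq omegaE !natrB //.
by field; rewrite pnatr_eq0 -lt0n.
Qed.

Lemma hs_gammao_Lmap_gamma1 k t a b : a != b -> hs (gammao xi a b) (L k (k + t) g1) = 0.
Proof.
move=> ab; rewrite Lmap_gamma1 hsZr hsDr !hsZr /Proj1 /Proj2 !sum_Eunit_diag //.
by rewrite !hs_gammao_diag // !mulr0 addr0 mulr0.
Qed.

Lemma hs_gammad_Lmap_gamma1 k t l : (1 <= l <= n)%N ->
  hs (gammad xi l) (L k (k + t) g1)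
  = s%:C * (2%:R * 'i * (sin t)%:C) * (gm_scale l)%:C * (if (l <= n1)%N then 0 else n1%:R).
Proof.
move=> hl; rewrite Lmap_gamma1 P2E hsZr hsDr !hsZr hsBr hs1r mxtrace_adj mxtrace_gammad //.
rewrite rmorph0 hs_gammad_Proj1 // -omega_sub_conj.
by move: (Num.conj (omega t)) (if _ then _ else _) => w' x; ring.
Qed.

Lemma invsqrt_split_gm_scale l : (1 <= l)%N ->
  (Num.sqrt (n%:R * (l - 1)%:R * l%:R))^-1 = s * gm_scale l :> R.
Proof.
move=> l_gt0; rewrite /gm_scale -invfM -sqrtrM ?ler0n // natrM.
by congr (Num.sqrt _)^-1; ring.
Qed.

Lemma hs_gammad_Lmap_gamma1_le k t l : (2 <= l <= n1)%N ->
  hs (gammad xi l) (L k (k + t) g1) = 0.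
Proof.
case/andP=> l_ge2 le_ln1.
by rewrite hs_gammad_Lmap_gamma1 ?le_ln1 ?mulr0 // (leq_trans _ l_ge2) ?(leq_trans le_ln1).
Qed.

Lemma hs_gammad_Lmap_gamma1_gt k t l : (n1 + 1 <= l <= n)%N ->
  hs (gammad xi l) (L k (k + t) g1)
  = (2 * n1%:R * sin t / Num.sqrt (n%:R * (l - 1)%:R * l%:R))%:C * 'i.
Proof.
rewrite addn1 => /andP[lt_n1l le_ln]; have l_gt0 : (0 < l)%N by apply: leq_trans lt_n1l.
rewrite hs_gammad_Lmap_gamma1 ?l_gt0 // leqNgt lt_n1l invsqrt_split_gm_scale //.
by ring.
Qed.

Lemma hs_gamma1_Lmap_gamma1_diag k : hs g1 (L k k g1) = 1.
Proof.
rewrite -{2}(addr0 k) hs_gamma1_Lmap_gamma1 omega0 sin0 mul0r rmorph0.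
by rewrite mulr0 mul0r subr0.
Qed.

Lemma hs_gamma1_Lmap_diag_traceless k rho : \tr rho = 0 -> hs g1 (L k k rho) = 0.
Proof.
move=> tr0; rewrite -{2}(addr0 k) hs_gamma1_Lmap_traceless //.
by rewrite sin0 mul0r rmorph0 mulr0 !mul0r.
Qed.

Lemma hs_gammad_Lmap_diag_gamma1 k l : (1 <= l <= n)%N -> hs (gammad xi l) (L k k g1) = 0.
Proof.
by move=> hl; rewrite -{2}(addr0 k) hs_gammad_Lmap_gamma1 // sin0 rmorph0 !(mulr0, mul0r).
Qed.

Lemma hs_gammao_Lmap_diag_gamma1 k a b : a != b -> hs (gammao xi a b) (L k k g1) = 0.
Proof. by move=> ab; rewrite -{2}(addr0 k) hs_gammao_Lmap_gamma1. Qed.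

End PartiallyOpenWalk.

Theorem mainTheorem1 (R : realType) (n n1 : nat) (xi : 'I_n -> 'cV[R[i]]_n)
  (U : 'M[R[i]]_n) (p : R) :
  (2 <= n)%N -> (1 <= n1)%N -> (n1 <= n - 1)%N ->
  (forall i j : 'I_n, adj (xi i) *m xi j = (i == j)%:R%:M) ->
  adj U *m U = 1%:M -> U *m adj U = 1%:M ->
  (Proj1 xi n1 *m U) *m adj (Proj1 xi n1 *m U)
    + (Proj2 xi n1 *m U) *m adj (Proj2 xi n1 *m U) = 1%:M ->
  0 <= p <= 1 ->
  let n2 := (n - n1)%N in
  let B1 := Proj1 xi n1 *m U in
  let B2 := Proj2 xi n1 *m U in
  let L := Lmap B1 B2 p in
  let g1 := gamma1 R n in
  forall k nu : R,
  (* (1) *)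
  (forall a b : 'I_n, a != b -> hs (gammao xi a b) (L k (k + nu) g1) = 0)
  (* (2) *)
  /\ hs g1 (L k (k + nu) g1)
       = (2 * n2%:R * cos nu / n%:R)%:C + ((n1%:R - n2%:R) / n%:R)%:C * omega nu
  /\ (forall l : nat, (2 <= l <= n1)%N -> hs (gammad xi l) (L k (k + nu) g1) = 0)
  /\ (forall l : nat, (n1 + 1 <= l <= n)%N ->
        hs (gammad xi l) (L k (k + nu) g1)
          = (2 * n1%:R * sin nu / Num.sqrt (n%:R * (l - 1)%:R * l%:R))%:C * 'i)
  (* (3) *)
  /\ hs g1 (L k (k + nu) g1)
       = omega nu - 2%:R * 'i * (sin nu / Num.sqrt n%:R)%:C * \tr (B2 *m g1 *m adj B2)
  /\ (forall l : nat, (2 <= l <= n)%N ->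
        hs g1 (L k (k + nu) (gammad xi l))
          = - 2%:R * 'i * (sin nu / Num.sqrt n%:R)%:C
              * \tr (B2 *m gammad xi l *m adj B2))
  /\ (forall a b : 'I_n, a != b ->
        hs g1 (L k (k + nu) (gammao xi a b))
          = - 2%:R * 'i * (sin nu / Num.sqrt n%:R)%:C
              * \tr (B2 *m gammao xi a b *m adj B2))
  (* in particular, for nu = 0: first row and first column of the matrix of L_{k,k} *)
  /\ hs g1 (L k k g1) = 1
  /\ (forall l : nat, (2 <= l <= n)%N ->
        hs (gammad xi l) (L k k g1) = 0 /\ hs g1 (L k k (gammad xi l)) = 0)
  /\ (forall a b : 'I_n, a != b ->
        hs (gammao xi a b) (L k k g1) = 0 /\ hs g1 (L k k (gammao xi a b)) = 0).
Proof.
move=> n_ge2 _ le_n1n1 ortho U_iso U_coiso unital _ n2 B1 B2 L g1 k nu.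
have n_gt0 : (0 < n)%N by apply: leq_trans n_ge2.
have le_n1n : (n1 <= n)%N by apply: leq_trans le_n1n1 (leq_subr 1 n).
have l_range l : (2 <= l <= n)%N -> (1 <= l <= n)%N by case/andP=> /ltnW -> ->.
split; first by move=> a b; apply: hs_gammao_Lmap_gamma1.
split; first exact: hs_gamma1_Lmap_gamma1E.
split; first by move=> l; apply: hs_gammad_Lmap_gamma1_le.
split; first by move=> l; apply: hs_gammad_Lmap_gamma1_gt.
split; first exact: hs_gamma1_Lmap_gamma1.
split; first by move=> l hl; apply: hs_gamma1_Lmap_traceless; rewrite ?mxtrace_gammad ?l_range.
split; first by move=> a b ab; apply: hs_gamma1_Lmap_traceless; rewrite ?mxtrace_gammao.
split; first exact: hs_gamma1_Lmap_gamma1_diag.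
split=> [l hl | a b ab]; split.
- by apply: hs_gammad_Lmap_diag_gamma1; rewrite ?l_range.
- by apply: hs_gamma1_Lmap_diag_traceless; rewrite ?mxtrace_gammad ?l_range.
- exact: hs_gammao_Lmap_diag_gamma1.
- by apply: hs_gamma1_Lmap_diag_traceless; rewrite ?mxtrace_gammao.
Qed.
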